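(* Let $\mathds{k}$ be an algebraically closed field, $A$ a finite abelian group, $\omega$ a normalized 3-cocycle on $A$ with values in $\mathds{k}^{\times}$, $B$ a finite abelian group, $f:B\to A$ a homomorphism with kernel $K$, and $\phi:B\times B\to\mathds{k}^\times$ a 2-cochain with $d\phi=f^*\omega^{-1}$. Let $Bil(\phi)(b,k)=\phi(b,k)/\phi(k,b)$ for $b\in B,k\in K$ (a bilinear map $B\times K\to\mathds{k}^\times$), $K^{\bot}:=\{b\in B: Bil(\phi)(b,k)=1\ \forall k\in K\}$ and $(K\cap K^{\bot})^{\bot}:=\{b\in B: Bil(\phi)(b,k)=1\ \forall k\in K\cap K^{\bot}\}$. Then $(K\cap K^{\bot})^{\bot} = K + K^{\bot}$.
   Context: For a 2-cochain $\kappa$, $(d\kappa)(a,b,c)=\kappa(b,c)\kappa(a+b,c)^{-1}\kappa(a,b+c)\kappa(a,b)^{-1}$; $(f^*\omega^{-1})(b,c,d)=\omega(f(b),f(c),f(d))^{-1}$. *)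

From HB Require Import structures.
From mathcomp Require Import all_boot all_order all_algebra.
Set Implicit Arguments. Unset Strict Implicit. Unset Printing Implicit Defensive.
Import GRing.Theory.
Local Open Scope ring_scope.

(* Cochains with values in k^x are modelled as k-valued functions that are
   pointwise nonzero. A, B are finite abelian groups (finZmodType, written
   additively). *)

Definition cochain3 (k : fieldType) (A : zmodType) (w : A -> A -> A -> k) :=
  forall a b c, w a b c != 0.

Definition cochain2 (k : fieldType) (B : zmodType) (p : B -> B -> k) :=
  forall a b, p a b != 0.

Definition d3 (k : fieldType) (A : zmodType) (w : A -> A -> A -> k)
  (a b c e : A) : k :=
  w b c e * (w (a + b) c e)^-1 * w a (b + c) e * (w a b (c + e))^-1 * w a b c.

Definition normalized_3cocycle (k : fieldType) (A : zmodType)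
  (w : A -> A -> A -> k) :=
  [/\ cochain3 w,
      (forall a b c e, d3 w a b c e = 1) &
      (forall a b c, (a == 0) || (b == 0) || (c == 0) -> w a b c = 1)].

Definition d2 (k : fieldType) (B : zmodType) (p : B -> B -> k) (a b c : B) : k :=
  p b c * (p (a + b) c)^-1 * p a (b + c) * (p a b)^-1.

Definition kerf (A B : finZmodType) (f : B -> A) : {set B} :=
  [set b | f b == 0].

Definition Bil (k : fieldType) (B : zmodType) (p : B -> B -> k) (b x : B) : k :=
  p b x / p x b.

Definition perp (k : fieldType) (B : finZmodType) (p : B -> B -> k)
  (S : {set B}) : {set B} :=
  [set b | [forall x in S, Bil p b x == 1]].

Definition setsum (B : finZmodType) (S T : {set B}) : {set B} :=
  [set x + y | x in S, y in T].

(* The cocycle condition makes d(phi) trivial on every triple with an entry in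
   K, and a 2-cochain identity then shows that Bil(phi) is bimultiplicative on
   B x K. Hence b |-> Bil(phi)(b, -) is a homomorphism from B to the characters
   of K with kernel K^perp, and the characters coming from K are trivial on the
   radical L = K cap K^perp, one for each coset of L in K. If y were in L^perp
   but not in K + K^perp, Bil(phi)(y, -) would be one more character of K
   trivial on L; by Dedekind's independence of characters, K/L has at most
   |K/L| characters. *)

From HB Require Import structures.
From mathcomp Require Import all_boot all_order all_algebra all_fingroup.
From mathcomp Require Import ring.

Set Implicit Arguments.
Unset Strict Implicit.
Unset Printing Implicit Defensive.
Import GRing.Theory.
Local Open Scope ring_scope.

Section CharacterIndependence.
Variables (k : fieldType) (B : finZmodType) (G : {group B}) (I : eqType).
Variable chi : I -> B -> k.
Hypothesis chiD : forall i, {in G &, {morph chi i : x y / x + y >-> x * y}}.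
Hypothesis chi_neq0 : forall i x, x \in G -> chi i x != 0.
Hypothesis chi_sep :
  forall i j, i != j -> exists2 x, x \in G & chi i x != chi j x.

Lemma characters_independent (s : seq I) (c : I -> k) :
  uniq s -> (forall x, x \in G -> \sum_(i <- s) c i * chi i x = 0) ->
  {in s, forall i, c i = 0}.
Proof.
elim: s c => [|i0 s IHs] c //= /andP[i0_s s_uniq] sum0.
have c_s : {in s, forall i, c i = 0}.
  move=> i i_s; have i_neq_i0 : i != i0 by apply: contraNneq i0_s => <-.
  have [y yG chi_y] := chi_sep i_neq_i0.
  have shifted_sum0 x : x \in G ->
      \sum_(j <- s) c j * (chi j y - chi i0 y) * chi j x = 0.
    move=> xG; have yxG : y + x \in G by rewrite -FinRing.zmodMgE groupM.
    have := sum0 x xG; have := sum0 _ yxG; rewrite !big_cons.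
    move=> /(canRL (addKr _)) sum_yx /(canRL (addKr _)) sum_x.
    transitivity (\sum_(j <- s) c j * chi j (y + x)
                    - chi i0 y * \sum_(j <- s) c j * chi j x).
      by rewrite mulr_sumr -sumrB; apply: eq_bigr => j _; rewrite chiD //; ring.
    by rewrite sum_yx sum_x chiD //; ring.
  have /eqP := IHs _ s_uniq shifted_sum0 i i_s.
  by rewrite mulf_eq0 subr_eq0 (negbTE chi_y) orbF => /eqP.
have c_i0 : c i0 = 0.
  have := sum0 _ (group1 G).
  rewrite big_cons big_seq big1 => [|j /c_s->]; last exact: mul0r.
  rewrite addr0 => /eqP; rewrite mulf_eq0 (negbTE (chi_neq0 _ (group1 G))) orbF.
  by move/eqP.
by move=> i; rewrite inE => /predU1P[->|/c_s].
Qed.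

End CharacterIndependence.

Section CharacterCount.
Variables (k : fieldType) (B : finZmodType) (G H : {group B}) (I : finType).
Variable chi : I -> B -> k.
Hypothesis chiD : forall i, {in G &, {morph chi i : x y / x + y >-> x * y}}.
Hypothesis chi_neq0 : forall i x, x \in G -> chi i x != 0.
Hypothesis chi_sep :
  forall i j, i != j -> exists2 x, x \in G & chi i x != chi j x.
Hypothesis sHG : H \subset G.
Hypothesis chi_H : forall i h, h \in H -> chi i h = 1.

Lemma card_characters_le_index : (#|I| <= #|G : H|%g)%N.
Proof.
pose M := \matrix_(i < #|I|, j < #|G : H|%g)
  chi (enum_val i) (repr (enum_val j)).
suff /eqnP <- : row_free M by apply: rank_leq_col.
apply: inj_row_free => v /rowP vM0; apply/rowP => i; rewrite mxE.
have H_coset : (H :* 1)%g \in rcosets H G by apply/rcosetsP; exists 1%g.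
have vchi0 x : x \in G -> \sum_(i : I) v 0 (enum_rank i) * chi i x = 0.
  move=> xG; have HxG : (H :* x)%g \in rcosets H G by apply/rcosetsP; exists x.
  have := vM0 (enum_rank_in H_coset (H :* x)%g).
  rewrite !mxE (reindex enum_rank) /=; last exact: onW_bij (enum_rank_bij I).
  move=> sumM0; apply: (etrans _ sumM0); apply: eq_bigr => j _.
  rewrite /M mxE enum_rankK enum_rankK_in //.
  have [h hH ->] := rcosetP (mem_repr_rcoset H x).
  by rewrite FinRing.zmodMgE chiD ?(chi_H _ hH) ?mul1r // (subsetP sHG).
have := characters_independent chiD chi_neq0 chi_sep (index_enum_uniq I) vchi0.
by move/(_ (enum_val i) (mem_index_enum _)); rewrite enum_valK.
Qed.

End CharacterCount.

Section BilIdentities.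
Variables (k : fieldType) (B : zmodType) (phi : B -> B -> k).
Hypothesis phi_neq0 : cochain2 phi.

Lemma Bil_neq0 b x : Bil phi b x != 0.
Proof. by rewrite /Bil mulf_neq0 ?invr_eq0. Qed.

Lemma Bil_skew b x : Bil phi b x * Bil phi x b = 1.
Proof. by rewrite /Bil; field; rewrite !phi_neq0. Qed.

Lemma BilD_d2 a b x :
  Bil phi a x * Bil phi b x =
  Bil phi (a + b) x * (d2 phi a b x * d2 phi x a b / d2 phi a x b).
Proof.
by rewrite /Bil /d2 (addrC x a) (addrC x b); field; rewrite !phi_neq0.
Qed.

Variable K : {pred B}.
Hypothesis d2_K :
  forall a b c, [|| a \in K, b \in K | c \in K] -> d2 phi a b c = 1.

Lemma BilDl a b x :
  [|| a \in K, b \in K | x \in K] ->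
  Bil phi (a + b) x = Bil phi a x * Bil phi b x.
Proof.
move=> abxK; rewrite BilD_d2 !d2_K ?divr1 ?mulr1 //.
all: by case/or3P: abxK => ->; rewrite ?orbT.
Qed.

Lemma BilDr b x y : x \in K -> Bil phi b (x + y) = Bil phi b x * Bil phi b y.
Proof.
move=> xK; apply: (mulIf (Bil_neq0 (x + y) b)).
by rewrite Bil_skew BilDl ?xK // mulrACA !Bil_skew mulr1.
Qed.

End BilIdentities.

Section Radical.
Variables (k : fieldType) (B : finZmodType) (phi : B -> B -> k).

Lemma perpP (S : {set B}) b :
  reflect {in S, forall x, Bil phi b x = 1} (b \in perp phi S).
Proof. by rewrite inE; apply: (iffP forall_inP) => bS x /bS/eqP. Qed.

Hypothesis phi_neq0 : cochain2 phi.

Lemma Bil_perp_sym (S : {set B}) b x :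
  b \in perp phi S -> x \in S -> Bil phi x b = 1.
Proof.
by move=> /perpP bS /bS Bbx; have := Bil_skew phi_neq0 x b; rewrite Bbx mulr1.
Qed.

Variable K : {group B}.
Hypothesis d2_K :
  forall a b c, [|| a \in K, b \in K | c \in K] -> d2 phi a b c = 1.

Lemma group_set_perp : group_set (perp phi K).
Proof.
apply/group_setP; split.
  apply/perpP => x xK; apply: (mulfI (Bil_neq0 phi_neq0 0 x)).
  by rewrite -(BilDl phi_neq0 d2_K) ?xK ?orbT // addr0 mulr1.
move=> a b /perpP aK /perpP bK; apply/perpP => x xK.
by rewrite FinRing.zmodMgE (BilDl phi_neq0 d2_K) ?xK ?orbT // aK ?bK ?mulr1.
Qed.

Canonical perp_group := Group group_set_perp.

Lemma subr_perp r s :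
  (r - s \in perp phi K) = [forall x in K, Bil phi r x == Bil phi s x].
Proof.
rewrite inE; apply: eq_forallb_in => x xK.
have -> : Bil phi r x = Bil phi (r - s) x * Bil phi s x.
  by rewrite -(BilDl phi_neq0 d2_K) ?xK ?orbT // subrK.
apply/eqP/eqP => [-> | Brs]; first exact: mul1r.
by apply: (mulIf (Bil_neq0 phi_neq0 s x)); rewrite mul1r.
Qed.

Let radical := (K :&: perp phi K)%G.

Lemma repr_rcoset_radical C : C \in rcosets radical K -> repr C \in K.
Proof.
case/rcosetsP => x xK ->.
have [l /setIP[lK _] ->] := rcosetP (mem_repr_rcoset radical x).
by rewrite groupM.
Qed.

Lemma rcoset_radical_eq C D :
  C \in rcosets radical K -> D \in rcosets radical K ->
  repr C - repr D \in perp phi K -> C = D.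
Proof.
have repr_radical E : E \in rcosets radical K -> (radical :* repr E)%g = E.
  by case/rcosetsP => x _ ->; rewrite rcoset_repr.
move=> CK DK CD_perp; rewrite -(repr_radical C CK) -(repr_radical D DK).
apply/rcoset_eqP/rcosetP; exists (repr C - repr D).
  rewrite inE CD_perp andbT -FinRing.zmodVgE -FinRing.zmodMgE.
  by rewrite groupM ?groupV ?repr_rcoset_radical.
by rewrite FinRing.zmodMgE subrK.
Qed.

Lemma perp_radical_subset y :
  y \in perp phi (K :&: perp phi K) -> y \in setsum K (perp phi K).
Proof.
move=> y_perp.
case: (boolP [exists x in K, y - x \in perp phi K]) => [/exists_inP[x xK yx_perp]|].
  by apply/imset2P; exists x (y - x); rewrite // addrC subrK.
rewrite negb_exists_in => /forall_inP y_sep; exfalso.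
have sep r s :
    r - s \notin perp phi K -> exists2 x, x \in K & Bil phi r x != Bil phi s x.
  by rewrite subr_perp negb_forall_in => /exists_inP.
pose I : finType := option {C : {set B} | C \in rcosets radical K}.
pose chi (i : I) := if i is Some C then Bil phi (repr (val C)) else Bil phi y.
suff: (#|I| <= #|K : radical|%g)%N by rewrite card_option card_sig ltnn.
apply: (card_characters_le_index (H := radical) (chi := chi)).
- by case=> [C|] x z xK _; apply: (BilDr phi_neq0 d2_K).
- by case=> [C|] x _; apply: Bil_neq0.
- case=> [C|] [D|] //= CD.
  + apply: sep; apply: contra CD => CD_perp.
    apply/eqP; congr Some; apply: val_inj.
    exact: rcoset_radical_eq (valP C) (valP D) CD_perp.
  + have [x xK] := sep _ _ (y_sep _ (repr_rcoset_radical (valP C))).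
    by exists x; rewrite // eq_sym.
  + exact: sep (y_sep _ (repr_rcoset_radical (valP D))).
- exact: subsetIl.
- case=> [C|] h /= hL; last exact: perpP y_perp h hL.
  case/setIP: hL => _ h_perp.
  exact: Bil_perp_sym h_perp (repr_rcoset_radical (valP C)).
Qed.

Lemma perp_setI_perp : perp phi (K :&: perp phi K) = setsum K (perp phi K).
Proof.
apply/setP => y; apply/idP/idP; first exact: perp_radical_subset.
case/imset2P => x p xK p_perp ->; apply/perpP => l /setIP[lK l_perp].
rewrite (BilDl phi_neq0 d2_K) ?lK ?orbT // (Bil_perp_sym l_perp xK).
by rewrite (perpP _ _ p_perp l lK) mulr1.
Qed.

End Radical.

Lemma group_set_kerf (A B : finZmodType) (f : {additive B -> A}) :
  group_set (kerf f).
Proof.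
apply/group_setP; split=> [|x y]; first by rewrite inE raddf0.
by rewrite !inE FinRing.zmodMgE raddfD => /eqP-> /eqP->; rewrite addr0.
Qed.

Canonical kerf_group (A B : finZmodType) (f : {additive B -> A}) :=
  Group (group_set_kerf f).

Theorem lemma2p1p2 (k : closedFieldType) (A : finZmodType)
  (w : A -> A -> A -> k) (B : finZmodType) (f : {additive B -> A})
  (phi : B -> B -> k) :
  normalized_3cocycle w ->
  cochain2 phi ->
  (forall a b c : B, d2 phi a b c = (w (f a) (f b) (f c))^-1) ->
  let K := kerf f in
  perp phi (K :&: perp phi K) = setsum K (perp phi K).
Proof.
move=> [_ _ w_normalized] phi_neq0 d2_phi K.
have d2_K a b c : [|| a \in K, b \in K | c \in K] -> d2 phi a b c = 1.
  by rewrite !inE => abcK; rewrite d2_phi w_normalized ?invr1 -?orbA.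
exact: (perp_setI_perp (K := kerf_group f) phi_neq0 d2_K).
Qed.
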